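(* For any integers $k\ge2$, $n\ge1$, any $k$-dimensional polytope $P$ and any $n$ positions $p_1,\dots,p_n\in P$, there exists a position $p\in P$ such that $\min_{i\in[n]}\{dis(p,p_i),dis(p,\partial P)\}\ge\frac{Disp(n;P)}{2}$.
   Context: $dis$ is Euclidean distance and $\partial P$ is the boundary of $P$. For integer $n\ge1$, $Disp(n;P)=\max_{X_1,\dots,X_n\in P}\min\{dis(X_i,\partial P),dis(X_i,X_j): i,j\in[n],i\ne j\}$. *)

From HB Require Import structures.
From mathcomp Require Import all_boot all_order all_algebra.
From mathcomp Require Import classical_sets reals.
Set Implicit Arguments. Unset Strict Implicit. Unset Printing Implicit Defensive.
Import Order.TTheory GRing.Theory Num.Theory.
Local Open Scope ring_scope.
Local Open Scope classical_set_scope.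

Section Defs.
Variable R : realType.

Definition dis (k : nat) (x y : 'rV[R]_k) : R :=
  Num.sqrt (\sum_(i < k) (x ord0 i - y ord0 i) ^+ 2).

Definition interior_E (k : nat) (P : set 'rV[R]_k) : set 'rV[R]_k :=
  [set x | exists2 r : R, 0 < r & forall y, dis x y < r -> P y].
Definition closure_E (k : nat) (P : set 'rV[R]_k) : set 'rV[R]_k :=
  [set x | forall e : R, 0 < e -> exists2 y, P y & dis x y < e].
Definition boundary (k : nat) (P : set 'rV[R]_k) : set 'rV[R]_k :=
  closure_E P `\` interior_E P.

Definition conv_hull (k m : nat) (V : 'I_m -> 'rV[R]_k) : set 'rV[R]_k :=
  [set x | exists w : 'I_m -> R, (forall i, 0 <= w i) /\ \sum_(i < m) w i = 1
           /\ x = \sum_(i < m) w i *: V i].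

(* a k-dimensional (convex) polytope in R^k: convex hull of finitely many
   points, with nonempty interior *)
Definition polytope (k : nat) (P : set 'rV[R]_k) : Prop :=
  (exists m (V : 'I_m -> 'rV[R]_k), P = conv_hull V) /\
  (exists x, interior_E P x).

Definition dis_bd (k : nat) (P : set 'rV[R]_k) (x : 'rV[R]_k) : R :=
  inf [set dis x y | y in boundary P].

Definition disp_val (k n : nat) (P : set 'rV[R]_k) (X : 'I_n -> 'rV[R]_k) : R :=
  inf [set r | (exists i, r = dis_bd P (X i)) \/
               (exists i j, i <> j /\ r = dis (X i) (X j))].

(* Disp(n;P) = max over X_1..X_n in P of disp_val (taken as a sup; the max is
   attained since P is compact) *)
Definition Disp (k n : nat) (P : set 'rV[R]_k) : R :=
  sup [set disp_val P X | X in [set X : 'I_n -> 'rV[R]_k | forall i, P (X i)]].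

End Defs.

From HB Require Import structures.
From mathcomp Require Import all_boot all_order all_algebra.
From mathcomp Require Import boolp classical_sets functions reals.
From mathcomp Require Import topology normedtype derive.
From mathcomp Require Import ring lra.
Import Order.TTheory GRing.Theory Num.Theory.
Import numFieldNormedType.Exports.
Set Implicit Arguments. Unset Strict Implicit. Unset Printing Implicit Defensive.
Local Open Scope ring_scope.
Local Open Scope classical_set_scope.

(* The clearance c(x) of x, the least of its distances to the boundary of P
   and to the p_i, is 1-Lipschitz, so it attains its maximum on the compact
   polytope P at some q; it suffices to show Disp(n;P) <= 2 c(q).  Take points
   X_1, ..., X_n of P whose mutual distances and distances to the boundary are
   all at least d > 0.  Shifting every X_l by d/2 along the first coordinate
   axis, and the X_l of least first coordinate also by -d/2, yields n + 1
   points of P at mutual distance >= d and at distance >= d/2 from the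
   boundary.  By pigeonhole one of them is at distance >= d/2 from every p_i,
   hence c(q) >= d/2. *)

Section EuclideanNorm.
Variables (R : realType) (k : nat).
Implicit Types (x y z v : 'rV[R]_k) (a c : R).

Definition enorm x : R := Num.sqrt (\sum_(i < k) x ord0 i ^+ 2).

Lemma disE x y : dis x y = enorm (x - y).
Proof.
by rewrite /dis /enorm; congr Num.sqrt; apply: eq_bigr => i _; rewrite !mxE.
Qed.

Lemma enorm_ge0 x : 0 <= enorm x.
Proof. exact: sqrtr_ge0. Qed.

Lemma enorm_sqr x : enorm x ^+ 2 = \sum_(i < k) x ord0 i ^+ 2.
Proof. by rewrite sqr_sqrtr // sumr_ge0 // => i _; apply: sqr_ge0. Qed.

Lemma enorm_eq0 x : enorm x = 0 -> forall i, x ord0 i = 0.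
Proof.
move=> x0 i; apply/eqP; rewrite -sqrf_eq0; apply/eqP.
move: (enorm_sqr x); rewrite x0 expr0n /= => /esym/psumr_eq0P -> // j _.
exact: sqr_ge0.
Qed.

Lemma enormZ a x : enorm (a *: x) = `|a| * enorm x.
Proof.
rewrite /enorm -sqrtr_sqr -sqrtrM ?sqr_ge0 //; congr Num.sqrt.
by rewrite mulr_sumr; apply: eq_bigr => i _; rewrite !mxE exprMn.
Qed.

Lemma enormN x : enorm (- x) = enorm x.
Proof. by rewrite -scaleN1r enormZ normrN normr1 mul1r. Qed.

Lemma cauchy_schwarz x y :
  \sum_(i < k) x ord0 i * y ord0 i <= enorm x * enorm y.
Proof.
set A := enorm x; set B := enorm y; set c := \sum_(i < k) _.
have [A0 B0] : 0 <= A /\ 0 <= B by split; apply: enorm_ge0.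
have two_AB_c : 2 * (A * B) * c <= 2 * (A ^+ 2 * B ^+ 2).
  have -> : 2 * (A ^+ 2 * B ^+ 2) =
      \sum_(i < k) (x ord0 i ^+ 2 * B ^+ 2 + y ord0 i ^+ 2 * A ^+ 2).
    by rewrite big_split /= -!mulr_suml /A /B !enorm_sqr; ring.
  rewrite /c mulr_sumr; apply: ler_sum => i _.
  have := sqr_ge0 (x ord0 i * B - y ord0 i * A); nra.
have [AB0|AB0] := eqVneq (A * B) 0; last first.
  have : 0 < A * B by rewrite lt_def AB0 mulr_ge0.
  nra.
rewrite AB0 /c big1 // => i _.
have /orP[/eqP/enorm_eq0 -> | /eqP/enorm_eq0 ->] : (A == 0) || (B == 0).
  by rewrite -mulf_eq0 AB0.
- by rewrite mul0r.
- by rewrite mulr0.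
Qed.

Lemma enormD x y : enorm (x + y) <= enorm x + enorm y.
Proof.
have xy0 : 0 <= enorm x + enorm y by rewrite addr_ge0 ?enorm_ge0.
rewrite {1}/enorm -(ger0_norm xy0) -sqrtr_sqr ler_sqrt ?sqr_ge0 //.
have -> : \sum_(i < k) (x + y) ord0 i ^+ 2 =
    enorm x ^+ 2 + enorm y ^+ 2 + 2 * \sum_(i < k) x ord0 i * y ord0 i.
  rewrite !enorm_sqr mulr_sumr -!big_split /=.
  by apply: eq_bigr => i _; rewrite !mxE; ring.
have := cauchy_schwarz x y; nra.
Qed.

Lemma dis_ge0 x y : 0 <= dis x y.
Proof. exact: sqrtr_ge0. Qed.

Lemma disC x y : dis x y = dis y x.
Proof. by rewrite !disE -opprB enormN. Qed.

Lemma disxx x : dis x x = 0.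
Proof. by rewrite disE subrr -(scale0r 0) enormZ normr0 mul0r. Qed.

Lemma dis_triangle x y z : dis x z <= dis x y + dis y z.
Proof. by rewrite !disE; apply: le_trans (enormD _ _); rewrite addrA subrK. Qed.

Lemma dis_line x v a c : dis (x + a *: v) (x + c *: v) = `|a - c| * enorm v.
Proof.
by rewrite disE -enormZ opprD addrACA subrr add0r -scaleNr -scalerDl.
Qed.

Lemma enorm_delta (i : 'I_k) : enorm (delta_mx 0 i) = 1.
Proof.
rewrite /enorm (bigD1 i) //= big1 => [|j ji].
  by rewrite mxE !eqxx expr1n addr0 sqrtr1.
by rewrite mxE (negbTE ji) andbF expr0n.
Qed.

Lemma dis_push (i : 'I_k) x y c : y ord0 i <= x ord0 i -> 0 <= c ->
  dis x y <= dis (x + c *: delta_mx 0 i) (y - c *: delta_mx 0 i).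
Proof.
move=> yx c0; rewrite ler_sqrt ?sumr_ge0 // => [|j _]; last exact: sqr_ge0.
apply: ler_sum => j _; rewrite !mxE eqxx /=.
have [->|_] := eqVneq j i; last by rewrite mulr0 subr0 addr0.
by rewrite mulr1; have := subr_ge0 (y ord0 i) (x ord0 i); rewrite yx; nra.
Qed.

End EuclideanNorm.

Section BoundaryDistance.
Variables (R : realType) (k : nat) (P : set 'rV[R]_k).
Implicit Types x y b : 'rV[R]_k.

Lemma dis_bd_ge0 x : 0 <= dis_bd P x.
Proof.
rewrite /dis_bd; have [->|ne] := eqVneq [set dis x y | y in boundary P] set0.
  by rewrite inf0.
by apply: lb_le_inf; [exact/set0P | move=> _ [y _ <-]; exact: dis_ge0].
Qed.

Lemma dis_bd_le x b : boundary P b -> dis_bd P x <= dis x b.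
Proof.
move=> Pb; apply: ge_inf; last by exists b.
by exists 0 => _ [y _ <-]; exact: dis_ge0.
Qed.

Lemma dis_bd_lipschitz x y : dis_bd P x - dis x y <= dis_bd P y.
Proof.
have [bd0|/set0P[b Pb]] := eqVneq (boundary P) set0.
  by rewrite /dis_bd bd0 !image_set0 inf0 subr_le0 dis_ge0.
rewrite [leRHS]/dis_bd; apply: lb_le_inf; first by exists (dis y b), b.
move=> _ [c Pc <-]; rewrite lerBlDr (le_trans (dis_bd_le x Pc)) //.
by rewrite addrC dis_triangle.
Qed.

Lemma segment_meets_boundary x y : P x -> ~ P y ->
  exists2 t, 0 <= t <= 1 & boundary P (x + t *: (y - x)).
Proof.
move=> Px nPy; set v := y - x; set L := enorm v.
have L1 : 0 < L + 1 by rewrite ltr_wpDl ?enorm_ge0.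
set T := [set t : R | 0 <= t <= 1 /\ P (x + t *: v)].
have T0 : T 0 by split; rewrite ?scale0r ?addr0 ?lexx ?ler01.
have supT : has_sup T by split; [exists 0 | exists 1 => t [/andP[]]].
set t0 := sup T.
have t0_ge0 : 0 <= t0 by exact: sup_upper_bound.
have t0_le1 : t0 <= 1 by apply: ge_sup; [exists 0 | move=> t [/andP[]]].
exists t0; first by rewrite t0_ge0 t0_le1.
split.
  move=> e e0; have e'0 : 0 < e / (L + 1) by rewrite divr_gt0.
  have [t [t01 Pt] t_gt] := sup_adherent e'0 supT.
  exists (x + t *: v) => //.
  have t_le : t <= t0 by exact: sup_upper_bound.
  rewrite dis_line ger0_norm ?subr_ge0 //.
  have : t0 - t < e / (L + 1) by rewrite -/t0 in t_gt; lra.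
  rewrite ltr_pdivlMr // -/L; nra.
move=> [r r0 ballP].
have [t0_1|t0_lt1] := eqVneq t0 1.
  apply: nPy; have -> : y = x + t0 *: v by rewrite t0_1 scale1r addrC subrK.
  by apply: ballP; rewrite disxx.
have {t0_lt1} t0_lt1 : t0 < 1 by rewrite lt_neqAle t0_lt1 t0_le1.
set d := Order.min (1 - t0) (r / (L + 1)).
have d0 : 0 < d by rewrite lt_min subr_gt0 t0_lt1 divr_gt0.
have d_le1 : d <= 1 - t0 by rewrite ge_min lexx.
have dL_lt : d * L < r.
  have : d * (L + 1) <= r by rewrite -ler_pdivlMr // ge_min lexx orbT.
  have := enorm_ge0 v; rewrite -/L; nra.
have Td : T (t0 + d).
  split; first by apply/andP; split; lra.
  by apply: ballP; rewrite dis_line opprD addNKr normrN gtr0_norm.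
by have := sup_upper_bound supT Td; rewrite -/t0; lra.
Qed.

Lemma dis_bd_ball_sub x y : P x -> dis x y < dis_bd P x -> P y.
Proof.
move=> Px xy_lt; apply: contrapT => nPy.
have [t /andP[t0 t1] Pb] := segment_meets_boundary Px nPy.
have := dis_bd_le x Pb.
have -> : dis x (x + t *: (y - x)) = t * dis x y.
  by rewrite disE opprD addNKr enormN enormZ ger0_norm // disC disE.
have := dis_ge0 x y; nra.
Qed.

End BoundaryDistance.

Section Clearance.
Variables (R : realType) (k n : nat) (P : set 'rV[R]_k) (p : 'I_n -> 'rV[R]_k).
Implicit Types x y : 'rV[R]_k.

Definition clearance x : R := \big[Order.min/dis_bd P x]_(i < n) dis x (p i).

Lemma clearance_ge a x :
  a <= dis_bd P x -> (forall i, a <= dis x (p i)) -> a <= clearance x.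
Proof.
move=> a_bd a_p; rewrite /clearance.
by elim/big_ind: _ => // u v au av; rewrite le_min au av.
Qed.

Lemma clearance_le_dis_bd x : clearance x <= dis_bd P x.
Proof.
rewrite /clearance; elim/big_rec: _ => // i u _ u_le.
by rewrite ge_min u_le orbT.
Qed.

Lemma clearance_le_dis x i : clearance x <= dis x (p i).
Proof. by rewrite /clearance (bigD1 i) //= ge_min lexx. Qed.

Lemma clearance_ge0 x : 0 <= clearance x.
Proof.
by apply: clearance_ge => [|i]; [exact: dis_bd_ge0 | exact: dis_ge0].
Qed.

Lemma clearance_lipschitz x y : `|clearance x - clearance y| <= dis x y.
Proof.
suff lip z w : clearance z - dis z w <= clearance w.
  by have := lip x y; have := lip y x; rewrite disC ler_norml; lra.
apply: clearance_ge.
  apply: le_trans (dis_bd_lipschitz P z w).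
  by rewrite lerD2r clearance_le_dis_bd.
move=> i; rewrite lerBlDr (le_trans (clearance_le_dis z i)) //.
by rewrite addrC dis_triangle.
Qed.

End Clearance.

Section Dispersion.
Variables (R : realType) (k n : nat) (P : set 'rV[R]_k) (X : 'I_n -> 'rV[R]_k).

Let disp_set := [set r | (exists i, r = dis_bd P (X i)) \/
                         (exists i j, i <> j /\ r = dis (X i) (X j))].

Let disp_set_lbound : has_lbound disp_set.
Proof.
by exists 0 => r [[i ->]|[i [j [_ ->]]]]; [exact: dis_bd_ge0 | exact: dis_ge0].
Qed.

Lemma disp_val_le_dis_bd i : disp_val P X <= dis_bd P (X i).
Proof. by apply: (ge_inf disp_set_lbound); left; exists i. Qed.

Lemma disp_val_le_dis i j : i <> j -> disp_val P X <= dis (X i) (X j).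
Proof. by move=> ij; apply: (ge_inf disp_set_lbound); right; exists i, j. Qed.

End Dispersion.

Section SeparatedPoints.
Variables (R : realType) (k : nat).
Implicit Types (s d : R).

Lemma far_point (T : finType) n (W : T -> 'rV[R]_k) (p : 'I_n -> 'rV[R]_k) s :
  (n < #|T|)%N -> (forall a b, a <> b -> 2 * s <= dis (W a) (W b)) ->
  exists a, forall i, s <= dis (W a) (p i).
Proof.
move=> n_lt W_sep; apply: contrapT => no_far.
have has_near a : exists i, dis (W a) (p i) < s.
  apply: contrapT => not_near; apply: no_far; exists a => i.
  by rewrite leNgt; apply/negP => near_i; apply: not_near; exists i.
pose c a := xchoose (has_near a).
have c_inj : injective c.
  move=> a b cab; apply: contrapT => ab; have := W_sep a b ab.
  have := xchooseP (has_near a); have := xchooseP (has_near b).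
  rewrite -/(c a) -/(c b) cab.
  by rewrite [dis (W b) _]disC; have := dis_triangle (W a) (p (c b)) (W b); lra.
by have := leq_card c c_inj; rewrite card_ord leqNgt n_lt.
Qed.

Hypothesis k_gt0 : (0 < k)%N.

Lemma spread_points (P : set 'rV[R]_k) n (X : 'I_n -> 'rV[R]_k) d :
  (0 < n)%N -> 0 < d -> (forall i, P (X i)) ->
  (forall i, d <= dis_bd P (X i)) ->
  (forall i j, i <> j -> d <= dis (X i) (X j)) ->
  exists W : option 'I_n -> 'rV[R]_k,
    [/\ forall a, P (W a), forall a, d / 2 <= dis_bd P (W a)
      & forall a b, a <> b -> d <= dis (W a) (W b)].
Proof.
move=> n_gt0 d_gt0 PX X_bd X_sep.
pose e : 'rV[R]_k := delta_mx 0 (Ordinal k_gt0).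
pose fst (x : 'rV[R]_k) := x ord0 (Ordinal k_gt0).
have [lo _ lo_min] := arg_minP (fst \o X) (isT : xpredT (Ordinal n_gt0)).
pose W a := if a is Some l then X l + (d / 2) *: e else X lo - (d / 2) *: e.
have W_dis a : dis (X (odflt lo a)) (W a) = d / 2.
  rewrite disE; case: a => [l|] /=; rewrite ?subKr ?opprD ?addNKr ?enormN;
  by rewrite enormZ enorm_delta mulr1 ger0_norm // divr_ge0 ?ltW.
(* X lo moves down and X l up, so their distance can only grow. *)
have W_sep_lo l : d <= dis (W (Some l)) (W None).
  have [->|l_lo] := eqVneq l lo.
    by rewrite /W -scaleNr dis_line enorm_delta mulr1 opprK -splitr gtr0_norm.
  apply: le_trans (X_sep l lo (elimN eqP l_lo)) _.
  by apply: dis_push; [exact: lo_min | rewrite divr_ge0 ?ltW].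
exists W; split.
- move=> a; apply: (dis_bd_ball_sub (PX (odflt lo a))).
  by rewrite W_dis; have := X_bd (odflt lo a); lra.
- move=> a; apply: le_trans (dis_bd_lipschitz P (X (odflt lo a)) (W a)).
  by rewrite W_dis; have := X_bd (odflt lo a); lra.
- case=> [l|] [l'|] ab; last by [].
  + rewrite /W !disE opprD addrACA subrr addr0 -disE.
    by apply: X_sep => ll'; apply: ab; rewrite ll'.
  + exact: W_sep_lo.
  + by rewrite disC; exact: W_sep_lo.
Qed.

Lemma disp_val_le_clearance (P : set 'rV[R]_k) n (p X : 'I_n -> 'rV[R]_k) :
  (0 < n)%N -> (forall i, P (X i)) ->
  exists2 q, P q & disp_val P X <= 2 * clearance P p q.
Proof.
move=> n_gt0 PX; set d := disp_val P X.
have [d_le0|d_gt0] := lerP d 0.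
  exists (X (Ordinal n_gt0)) => //.
  by rewrite (le_trans d_le0) ?mulr_ge0 ?clearance_ge0.
have [W [PW W_bd W_sep]] := spread_points n_gt0 d_gt0 PX
  (disp_val_le_dis_bd P X) (disp_val_le_dis P X).
have n_lt : (n < #|{: option 'I_n}|)%N by rewrite card_option card_ord.
have W_sep2 a b : a <> b -> 2 * (d / 2) <= dis (W a) (W b).
  by rewrite mulrC divfK ?pnatr_eq0 //; exact: W_sep.
have [a a_far] := far_point p n_lt W_sep2.
exists (W a) => //; suff : d / 2 <= clearance P p (W a) by lra.
exact: clearance_ge.
Qed.

End SeparatedPoints.

Section Compactness.
Variable R : realType.

Lemma continuous_sumr (T : topologicalType) (V : normedModType R) (I : Type)
    (r : seq I) (f : I -> T -> V) :
  (forall i, continuous (f i)) -> continuous (fun x => \sum_(i <- r) f i x).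
Proof.
move=> f_cont; elim: r => [|i r IHr].
  have -> : (fun x => \sum_(i <- [::]) f i x) = fun=> 0.
    by apply/funext => x; rewrite big_nil.
  exact: cst_continuous.
have -> : (fun x => \sum_(j <- i :: r) f j x) =
    f i + (fun x => \sum_(j <- r) f j x).
  by apply/funext => x; rewrite big_cons.
by move=> x; exact: continuousD (f_cont i x) (IHr x).
Qed.

Lemma lipschitz_continuous (V : normedModType R) (f : V -> R) C :
  (forall x y, `|f x - f y| <= C * `|x - y|) -> continuous f.
Proof.
move=> f_lip x; apply/cvgrPdist_lt => e e0.
have C1 : 0 < `|C| + 1 by rewrite ltr_wpDl.
near=> y; apply: le_lt_trans (f_lip x y) _.
have : `|x - y| < e / (`|C| + 1).
  by near: y; apply: cvgr_dist_lt; rewrite ?divr_gt0.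
rewrite ltr_pdivlMr // => xy_lt.
have := normr_ge0 (x - y); have := ler_norm C; nra.
Unshelve. all: by end_near.
Qed.

Definition simplex m : set 'rV[R]_m :=
  [set w | (forall j, 0 <= w ord0 j) /\ \sum_(j < m) w ord0 j = 1].
Arguments simplex : clear implicits.

Lemma simplex_compact m : compact (simplex m).
Proof.
apply: bounded_closed_compact.
  exists 1; split => // M M1 w [w0 w1].
  apply: le_trans (ltW M1); rewrite /Num.norm /= mx_normrE.
  apply: bigmax_le => // ij _.
  rewrite (ord1 ij.1) ger0_norm // -w1 (bigD1 ij.2) //= lerDl.
  by apply: sumr_ge0 => j _.
have -> : simplex m =
    \bigcap_j ((fun w : 'rV[R]_m => w ord0 j) @^-1` [set x | 0 <= x]) `&`
    ((fun w : 'rV[R]_m => \sum_(j < m) w ord0 j) @^-1` [set 1]).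
  apply/seteqP; split => w [w0 w1]; split => // j.
  - by move=> _; exact: w0.
  - exact: w0.
apply: closedI.
  apply: closed_bigI => j _; apply: preimage_closed; last exact: closed_ge.
  by move=> w _; exact: coord_continuous.
apply: preimage_closed; last exact: closed_eq.
by move=> w _; apply: continuous_sumr => j; exact: coord_continuous.
Qed.

Lemma conv_hullE k m (V : 'I_m -> 'rV[R]_k) :
  conv_hull V = (fun w : 'rV[R]_m => \sum_(j < m) w ord0 j *: V j) @` simplex m.
Proof.
apply/seteqP; split => [_ [w [w0 [w1 ->]]] | _ [w [w0 w1] <-]].
  exists (\row_j w j); last by apply: eq_bigr => j _; rewrite mxE.
  by split => [j|]; rewrite ?mxE //; under eq_bigr do rewrite mxE.
by exists (fun j => w ord0 j).
Qed.

Lemma conv_hull_compact k m (V : 'I_m -> 'rV[R]_k) : compact (conv_hull V).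
Proof.
rewrite conv_hullE; apply: continuous_compact; last exact: simplex_compact.
apply: continuous_subspaceT; apply: continuous_sumr => j w.
exact/continuousZr_tmp/coord_continuous.
Qed.

Lemma dis_le_mx_norm k (x y : 'rV[R]_k) : dis x y <= Num.sqrt k%:R * `|x - y|.
Proof.
rewrite disE /enorm -(ger0_norm (normr_ge0 (x - y))) -sqrtr_sqr.
rewrite -sqrtrM ?ler0n //.
rewrite ler_sqrt ?mulr_ge0 ?sqr_ge0 // mulr_natl -[in X in _ *+ X](card_ord k).
rewrite -sumr_const; apply: ler_sum => j _.
have coord_le : `|(x - y) ord0 j| <= `|x - y|.
  rewrite [leRHS]/Num.norm /= mx_normrE.
  by apply/bigmax_geP; right; exists (ord0, j).
have := normr_ge0 ((x - y) ord0 j).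
by rewrite -real_normK ?num_real //; nra.
Qed.

Lemma clearance_continuous k n (P : set 'rV[R]_k) (p : 'I_n -> 'rV[R]_k) :
  continuous (clearance P p).
Proof.
apply: (@lipschitz_continuous _ _ (Num.sqrt k%:R)) => x y.
exact: le_trans (clearance_lipschitz P p x y) (dis_le_mx_norm x y).
Qed.

End Compactness.

Theorem lemma4 (R : realType) (k n : nat) (hk : (2 <= k)%N) (hn : (1 <= n)%N)
  (P : set 'rV[R]_k) (hP : polytope P)
  (p : 'I_n -> 'rV[R]_k) (hp : forall i, P (p i)) :
  exists q : 'rV[R]_k, P q /\
    (forall i, Disp n P / 2 <= dis q (p i)) /\
    Disp n P / 2 <= dis_bd P q.
Proof.
have [[m [V P_hull]] [x0 [r r0 ball_x0]]] := hP.
have P_nonempty : P !=set0 by exists x0; apply: ball_x0; rewrite disxx.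
have P_compact : compact P by rewrite P_hull; exact: conv_hull_compact.
have clearance_within : {within P, continuous (clearance P p)}.
  exact/continuous_subspaceT/clearance_continuous.
have [q /[!inE] Pq q_max] := EVT_max_rV P_nonempty P_compact clearance_within.
have Disp_le : Disp n P <= 2 * clearance P p q.
  apply: ge_sup; first by exists (disp_val P p), p.
  move=> _ [X PX <-].
  have [q' Pq' /le_trans] := disp_val_le_clearance (ltnW hk) p hn PX.
  by apply; rewrite ler_pM2l // q_max ?inE.
exists q; split=> //; split=> [i|].
- by have := clearance_le_dis P p q i; lra.
- by have := clearance_le_dis_bd P p q; lra.
Qed.
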